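(* Let $L>2$, $\Delta=L^{-1}$, $\varepsilon_1=24\exp(-L)$, and define $$\Phi_\pm(x)=L\int_{-1/2\mp\Delta^{1/2}}^{1/2\pm\Delta^{1/2}}\Gamma\big((x-\mu)L\big)\,\mathrm{d}\mu\ \pm\ \varepsilon_1\Gamma(x),$$ where $\Gamma(x)=\exp(-\pi x^2)$. Let $\chi$ be the characteristic function of $[-1/2,1/2)$. Then $\Phi_-(x)\le\chi(x)\le\Phi_+(x)$ for all $x\in\mathbb{R}$, and $$\int_{-\infty}^{\infty}\Phi_\pm(x)\,\mathrm{d}x=1\pm(2\Delta^{1/2}+\varepsilon_1).$$
   Context: In $\Phi_\pm$ the upper signs go with $\Phi_+$ and the lower signs with $\Phi_-$. $\Gamma$ here denotes the Gaussian $\exp(-\pi x^2)$, not Euler's Gamma function. *)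

From Stdlib Require Import Reals Lra ClassicalEpsilon.
Open Scope R_scope.

Definition Gam (x : R) : R := exp (- PI * x ^ 2).

(* Oriented Riemann integral of f from a to b (value of RiemannInt when f is
   Riemann integrable on [a,b]; an unspecified real otherwise). *)
Definition Rint (f : R -> R) (a b : R) : R :=
  epsilon (inhabits 0)
    (fun v => exists pr : Riemann_integrable f a b, RiemannInt pr = v).

Definition improper_int_R (f : R -> R) (l : R) : Prop :=
  (forall a b : R, inhabited (Riemann_integrable f a b)) /\
  (forall eps : R, 0 < eps -> exists M : R, forall a b : R,
      a <= - M -> M <= b -> Rabs (Rint f a b - l) < eps).

Definition Dlt (L : R) : R := / L.
Definition eps1 (L : R) : R := 24 * exp (- L).

Definition Phi_plus (L x : R) : R :=
  L * Rint (fun mu => Gam ((x - mu) * L))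
           (- (1/2) - sqrt (Dlt L)) (1/2 + sqrt (Dlt L))
  + eps1 L * Gam x.

Definition Phi_minus (L x : R) : R :=
  L * Rint (fun mu => Gam ((x - mu) * L))
           (- (1/2) + sqrt (Dlt L)) (1/2 - sqrt (Dlt L))
  - eps1 L * Gam x.

Definition chi (x : R) : R :=
  if Rle_dec (- (1/2)) x then (if Rlt_dec x (1/2) then 1 else 0) else 0.

(* With [GamInt t = int_0^t Gam], the substitution in [mu] turns
   [L * int_{-h}^{h} Gam ((x - mu) L) dmu] into the smoothed indicator
   [window h L x = GamInt ((x + h) L) - GamInt ((x - h) L)] of [[-h, h]].
   Everything rests on the tail bound [0 <= 1/2 - GamInt t <= Gam t] for [t >= 0],
   which comes from Feynman's identity
   [GamInt t ^ 2 + int_0^1 exp (- PI (1 + x^2) t^2) / (PI (1 + x^2)) dx = 1/4].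
   On [[-1/2, 1/2)] the window of half-width [1/2 + L^{-1/2}] misses [1] by at
   most [2 Gam (sqrt L) <= 2 e^{-L} Gam x]; off it, the window of half-width
   [1/2 - L^{-1/2}] is nonpositive when [L <= 4] and otherwise at most
   [Gam ((x - 1/2) L + sqrt L) <= e^{-L} Gam x].  For the integrals, the window
   plus [c Gam] has the odd antiderivative built from
   [GamInt_primitive t = t GamInt t + Gam t / (2 PI) = t/2 + O(1/t)]. *)

From Stdlib Require Import Reals Lra ClassicalEpsilon FunctionalExtensionality.
Open Scope R_scope.

Local Notation D := derivable_pt_lim.

Lemma Rint_RiemannInt f a b (pr : Riemann_integrable f a b) : Rint f a b = RiemannInt pr.
Proof.
  unfold Rint.
  destruct (epsilon_spec (inhabits 0) (fun v => exists pr, RiemannInt pr = v)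
     (ex_intro _ (RiemannInt pr) (ex_intro _ pr eq_refl))) as [pr' <-].
  apply RiemannInt_P5.
Qed.

Lemma continuity_Riemann_integrable f a b : continuity f -> Riemann_integrable f a b.
Proof.
  intro cf. destruct (Rle_dec a b).
  - apply continuity_implies_RiemannInt; auto.
  - apply RiemannInt_P1, continuity_implies_RiemannInt; auto; lra.
Qed.

Lemma Rint_antiderivative F f a b :
  (forall x, D F x (f x)) -> continuity f -> Rint f a b = F b - F a.
Proof.
  intros dF cf.
  pose (dF' x := exist (fun l => derivable_pt_abs F x l) (f x) (dF x)).
  rewrite (Rint_RiemannInt f a b (continuity_Riemann_integrable f a b cf)).
  exact (FTC_Riemann {| c1 := F; diff0 := dF'; cont1 := cf |} _).
Qed.

Lemma Rint_le f g a b : a <= b -> continuity f -> continuity g ->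
  (forall x, a <= x <= b -> f x <= g x) -> Rint f a b <= Rint g a b.
Proof.
  intros hab cf cg fg.
  rewrite (Rint_RiemannInt f a b (continuity_Riemann_integrable f a b cf)),
    (Rint_RiemannInt g a b (continuity_Riemann_integrable g a b cg)).
  apply RiemannInt_P19; auto. intros; apply fg; lra.
Qed.

Lemma Rint_plus_scal f g l a b : continuity f -> continuity g ->
  Rint (fun x => f x + l * g x) a b = Rint f a b + l * Rint g a b.
Proof.
  intros cf cg.
  pose proof (continuity_Riemann_integrable f a b cf) as If.
  pose proof (continuity_Riemann_integrable g a b cg) as Ig.
  rewrite (Rint_RiemannInt f a b If), (Rint_RiemannInt g a b Ig),
    (Rint_RiemannInt _ a b (RiemannInt_P10 l If Ig)).
  apply RiemannInt_P13.
Qed.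

Lemma Rint_primitive f : continuity f -> forall x, D (fun t => Rint f 0 t) x (f x).
Proof.
  intros cf x.
  set (a := - (Rabs x + 1)); set (b := Rabs x + 1).
  pose proof (Rle_abs x); pose proof (Rle_abs (- x)); rewrite Rabs_Ropp in *.
  assert (hab : a <= b) by (unfold a, b; lra).
  assert (cf' : forall y, a <= y <= b -> continuity_pt f y) by (intros; apply cf).
  apply (derivable_pt_lim_locally_ext
           (fun z => primitive hab (FTC_P1 hab cf') z - Rint f a 0) _ x a b);
    [unfold a, b; lra | |].
  - intros z hz. unfold primitive.
    destruct (Rle_dec a z); [|lra]. destruct (Rle_dec z b); [|lra].
    rewrite <- Rint_RiemannInt.
    rewrite !(Rint_RiemannInt f _ _ (continuity_Riemann_integrable _ _ _ cf)).
    rewrite <- (RiemannInt_P26 (continuity_Riemann_integrable f a 0 cf)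
      (continuity_Riemann_integrable f 0 z cf)). ring.
  - replace (f x) with (f x - 0) by ring.
    apply derivable_pt_lim_minus; [apply RiemannInt_P28; unfold a, b; lra|].
    apply derivable_pt_lim_const.
Qed.

Lemma D_eq f x l l' : D f x l -> l = l' -> D f x l'.
Proof. now intros ? <-. Qed.
Lemma D_const c x : D (fun _ => c) x 0.
Proof. apply derivable_pt_lim_const. Qed.
Lemma D_id x : D (fun y => y) x 1.
Proof. apply derivable_pt_lim_id. Qed.
Lemma D_plus f g x a b : D f x a -> D g x b -> D (fun y => f y + g y) x (a + b).
Proof. apply derivable_pt_lim_plus. Qed.
Lemma D_minus f g x a b : D f x a -> D g x b -> D (fun y => f y - g y) x (a - b).
Proof. apply derivable_pt_lim_minus. Qed.
Lemma D_opp f x a : D f x a -> D (fun y => - f y) x (- a).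
Proof. apply derivable_pt_lim_opp. Qed.
Lemma D_mult f g x a b :
  D f x a -> D g x b -> D (fun y => f y * g y) x (a * g x + f x * b).
Proof. apply derivable_pt_lim_mult. Qed.
Lemma D_div f g x a b : D f x a -> D g x b -> g x <> 0 ->
  D (fun y => f y / g y) x ((a * g x - b * f x) / (g x * g x)).
Proof. intros; apply derivable_pt_lim_div; auto. Qed.
Lemma D_pow2 f x a : D f x a -> D (fun y => f y ^ 2) x (2 * f x * a).
Proof.
  intro df. apply (derivable_pt_lim_ext (fun y => f y * f y)); [intro; ring|].
  eapply D_eq; [apply D_mult; exact df | ring].
Qed.
Lemma D_comp g g' f x a : (forall y, D g y (g' y)) -> D f x a ->
  D (fun y => g (f y)) x (g' (f x) * a).
Proof. intros dg df. apply (derivable_pt_lim_comp f g); auto. Qed.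

Lemma continuity_of_derivative f f' : (forall x, D f x (f' x)) -> continuity f.
Proof. intros df x. apply derivable_continuous_pt. exists (f' x). apply df. Qed.

(* Known derivatives are given as [Hint Extern] rather than [Hint Resolve]:
   the latter does not instantiate the derivative evar left by [D_comp]. *)
Create HintDb derive.

#[local] Hint Extern 0 (D exp _ _) => apply derivable_pt_lim_exp : derive.
#[local] Hint Extern 0 (D atan _ _) => apply derivable_pt_lim_atan : derive.

Ltac D_step := first [ apply D_const | apply D_id | solve [eauto with derive]
  | apply D_comp; [solve [eauto with derive] |]
  | apply D_plus | apply D_minus | apply D_opp | apply D_pow2 | apply D_div
  | apply D_mult ].
Ltac D_solve := eapply D_eq; [repeat D_step | cbv beta].
Ltac continuity_solve :=
  let x := fresh "x" in
  intro x; apply derivable_continuous_pt; eexists; unfold derivable_pt_abs; repeat D_step.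

Lemma continuity_fct_cte c : continuity (fun _ => c).
Proof. apply derivable_continuous, derivable_const. Qed.

Lemma Rint_const c a b : Rint (fun _ => c) a b = c * (b - a).
Proof.
  rewrite (Rint_antiderivative (fun x => c * x)); [ring | intro; D_solve; ring |].
  apply continuity_fct_cte.
Qed.

Lemma Rint_abs_le f a b M : a <= b -> continuity f ->
  (forall x, a <= x <= b -> Rabs (f x) <= M) -> Rabs (Rint f a b) <= M * (b - a).
Proof.
  intros hab cf fM.
  assert (Rint f a b <= Rint (fun _ => M) a b).
  { apply Rint_le; auto using continuity_fct_cte. intros x hx. pose proof (fM x hx); pose proof (Rle_abs (f x)); lra. }
  assert (Rint (fun _ => - M) a b <= Rint f a b).
  { apply Rint_le; auto using continuity_fct_cte.
    intros x hx. pose proof (fM x hx); pose proof (Rle_abs (- f x)).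
    rewrite Rabs_Ropp in *; lra. }
  rewrite !Rint_const in *. apply Rabs_le; lra.
Qed.

Lemma exp_le_exp x y : x <= y -> exp x <= exp y.
Proof. intros [h | ->]; [apply Rlt_le, exp_increasing, h | apply Rle_refl]. Qed.

Lemma Gam_pos x : 0 < Gam x.
Proof. apply exp_pos. Qed.

Lemma Gam_opp x : Gam (- x) = Gam x.
Proof. unfold Gam. f_equal. ring. Qed.

Lemma derivable_pt_lim_Gam x : D Gam x (-2 * PI * x * Gam x).
Proof. unfold Gam. D_solve. ring. Qed.
#[local] Hint Extern 0 (D Gam _ _) => apply derivable_pt_lim_Gam : derive.

Lemma continuity_Gam : continuity Gam.
Proof. exact (continuity_of_derivative _ _ derivable_pt_lim_Gam). Qed.

Definition GamInt (t : R) : R := Rint Gam 0 t.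

Lemma derivable_pt_lim_GamInt x : D GamInt x (Gam x).
Proof. exact (Rint_primitive Gam continuity_Gam x). Qed.
#[local] Hint Extern 0 (D GamInt _ _) => apply derivable_pt_lim_GamInt : derive.

Lemma Rint_Gam a b : Rint Gam a b = GamInt b - GamInt a.
Proof. exact (Rint_antiderivative _ _ a b derivable_pt_lim_GamInt continuity_Gam). Qed.

Lemma GamInt_0 : GamInt 0 = 0.
Proof. pose proof (Rint_Gam 0 0) as E. unfold GamInt at 1 in E. lra. Qed.

Lemma GamInt_opp t : GamInt (- t) = - GamInt t.
Proof.
  assert (E : Rint Gam 0 t = - GamInt (- t) - - GamInt (- 0)).
  { apply (Rint_antiderivative (fun y => - GamInt (- y))); [|exact continuity_Gam].
    intro x. D_solve. rewrite Gam_opp. ring. }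
  unfold GamInt at 2. rewrite E, Ropp_0, GamInt_0. ring.
Qed.

Lemma GamInt_le a b : a <= b -> GamInt a <= GamInt b.
Proof.
  intro hab. assert (Rint (fun _ => 0) a b <= Rint Gam a b).
  { apply Rint_le; auto using continuity_Gam, continuity_fct_cte.
    intros x _; apply Rlt_le, Gam_pos. }
  rewrite Rint_const, Rint_Gam in *. lra.
Qed.

Lemma Taylor_remainder_le (f f' f'' : R -> R) M t s :
  (forall u, D f u (f' u)) -> (forall u, D f' u (f'' u)) -> (forall u, Rabs (f'' u) <= M) ->
  Rabs (f (t + s) - f t - s * f' t) <= M * s ^ 2.
Proof.
  intros df df' bound.
  destruct (MVT_abs (fun u => f u - u * f' t) (fun u => f' u - f' t) t (t + s))
    as [xi [Exi xi_between]].
  { intros c _. D_solve. ring. }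
  destruct (MVT_abs f' f'' t xi) as [eta [Eeta _]]; [intros; apply df'|].
  replace (f (t + s) - f t - s * f' t)
    with (f (t + s) - (t + s) * f' t - (f t - t * f' t)) by ring.
  rewrite Exi, Eeta. replace (t + s - t) with s by ring.
  assert (Rabs (xi - t) <= Rabs s).
  { unfold Rmin, Rmax in xi_between. destruct (Rle_dec t (t + s));
    apply Rabs_le; pose proof (Rle_abs s); pose proof (Rle_abs (- s));
    rewrite Rabs_Ropp in *; lra. }
  pose proof (bound eta); pose proof (Rabs_pos (xi - t)); pose proof (Rabs_pos s).
  pose proof (Rabs_pos (f'' eta)).
  replace (s ^ 2) with (Rabs s * Rabs s) by (rewrite <- Rabs_mult, Rabs_right; nra).
  rewrite <- Rmult_assoc. apply Rmult_le_compat_r; [lra|]. apply Rmult_le_compat; lra.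
Qed.

Section ParametricIntegral.

Variables (k dk : R -> R -> R) (a b t M : R).
Hypotheses (hab : a <= b) (ck : forall s, continuity (k s)) (cdk : continuity (dk t)).
Hypothesis k_Taylor :
  forall h x, a <= x <= b -> Rabs (k (t + h) x - k t x - h * dk t x) <= M * h ^ 2.

Lemma Rint_param_Taylor h :
  Rabs (Rint (k (t + h)) a b - Rint (k t) a b - h * Rint (dk t) a b) <= M * h ^ 2 * (b - a).
Proof.
  assert (c1 : continuity (fun x => k (t + h) x + -1 * k t x))
    by (apply continuity_plus, continuity_scal; apply ck).
  replace (Rint (k (t + h)) a b - Rint (k t) a b - h * Rint (dk t) a b)
    with (Rint (fun x => k (t + h) x + -1 * k t x + - h * dk t x) a b)
    by (rewrite !Rint_plus_scal; auto; ring).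
  apply Rint_abs_le; auto.
  - apply continuity_plus, continuity_scal; auto.
  - intros x hx. replace (k (t + h) x + -1 * k t x + - h * dk t x)
      with (k (t + h) x - k t x - h * dk t x) by ring. auto.
Qed.

Lemma derivable_pt_lim_Rint_param : D (fun s => Rint (k s) a b) t (Rint (dk t) a b).
Proof.
  intros eps heps.
  assert (hM : 0 <= M) by (pose proof (k_Taylor 1 a (conj (Rle_refl a) hab));
    pose proof (Rabs_pos (k (t + 1) a - k t a - 1 * dk t a)); lra).
  assert (hC : 0 < M * (b - a) + 1) by nra.
  assert (hd : 0 < eps / (M * (b - a) + 1)) by (apply Rdiv_lt_0_compat; lra).
  exists (mkposreal _ hd). intros h hh hlt. simpl in hlt.
  pose proof (Rint_param_Taylor h) as bound.
  replace ((Rint (k (t + h)) a b - Rint (k t) a b) / h - Rint (dk t) a b)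
    with ((Rint (k (t + h)) a b - Rint (k t) a b - h * Rint (dk t) a b) / h) by (field; auto).
  unfold Rdiv. rewrite Rabs_mult, Rabs_inv.
  pose proof (Rabs_pos_lt h hh).
  apply (Rmult_lt_reg_r (Rabs h)); auto. rewrite Rmult_assoc, Rinv_l, Rmult_1_r by lra.
  replace (h ^ 2) with (Rabs h * Rabs h) in bound by (rewrite <- Rabs_mult, Rabs_right; nra).
  apply (Rmult_lt_compat_r (M * (b - a) + 1)) in hlt; auto.
  unfold Rdiv in hlt. rewrite Rmult_assoc, Rinv_l, Rmult_1_r in hlt by lra. nra.
Qed.

End ParametricIntegral.

Lemma PI_gt_3 : 3 < PI.
Proof. pose proof PI2_3_2. lra. Qed.

Definition feynman_kernel (t x : R) : R :=
  exp (- (PI * (1 + x ^ 2)) * t ^ 2) / (PI * (1 + x ^ 2)).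
Definition feynman (t : R) : R := Rint (feynman_kernel t) 0 1.

Lemma feynman_denom_pos x : 0 < PI * (1 + x ^ 2).
Proof. pose proof PI_RGT_0; pose proof (pow2_ge_0 x). nra. Qed.

Lemma continuity_feynman_kernel t : continuity (feynman_kernel t).
Proof.
  unfold feynman_kernel. continuity_solve. pose proof (feynman_denom_pos x). lra.
Qed.

Lemma exp_quadratic_Taylor c t s : 0 < c ->
  Rabs (exp (- c * (t + s) ^ 2) / c - exp (- c * t ^ 2) / c
        - s * (-2 * t * exp (- c * t ^ 2))) <= 6 * s ^ 2.
Proof.
  intro hc.
  apply (Taylor_remainder_le (fun u => exp (- c * u ^ 2) / c)
           (fun u => -2 * u * exp (- c * u ^ 2))
           (fun u => (-2 + 4 * c * u ^ 2) * exp (- c * u ^ 2))).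
  - intro u. D_solve; [lra | field; lra].
  - intro u. D_solve. ring.
  - intro u. set (y := c * u ^ 2).
    assert (hy : 0 <= y) by (unfold y; pose proof (pow2_ge_0 u); nra).
    replace (- c * u ^ 2) with (- y) by (unfold y; ring).
    replace (4 * c * u ^ 2) with (4 * y) by (unfold y; ring).
    rewrite exp_Ropp. pose proof (exp_pos y). pose proof (exp_ineq1_le y).
    assert (0 < / exp y <= 1) by (split; [apply Rinv_0_lt_compat; lra|
      rewrite <- Rinv_1; apply Rinv_le_contravar; lra]).
    assert (y * / exp y <= 1) by (apply (Rmult_le_reg_r (exp y)); auto;
      rewrite Rmult_assoc, Rinv_l; lra).
    rewrite Rabs_mult, (Rabs_right (/ exp y)) by lra.
    apply Rle_trans with ((2 + 4 * y) * / exp y); [|nra].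
    apply Rmult_le_compat_r; [lra|]. apply Rabs_le; lra.
Qed.

Lemma derivable_pt_lim_feynman t : D feynman t (-2 * Gam t * GamInt t).
Proof.
  set (dk x := -2 * t * exp (- (PI * (1 + x ^ 2)) * t ^ 2)).
  replace (-2 * Gam t * GamInt t) with (Rint dk 0 1).
  - apply (derivable_pt_lim_Rint_param _ _ 0 1 t 6);
      [lra | apply continuity_feynman_kernel | unfold dk; continuity_solve |].
    intros h x _. apply exp_quadratic_Taylor, feynman_denom_pos.
  - rewrite (Rint_antiderivative (fun x => -2 * Gam t * GamInt (t * x))).
    + rewrite Rmult_0_r, Rmult_1_r, GamInt_0. ring.
    + intro x. D_solve. unfold dk, Gam.
      replace (- (PI * (1 + x ^ 2)) * t ^ 2) with (- PI * t ^ 2 + - PI * (t * x) ^ 2) by ring.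
      rewrite exp_plus. ring.
    + unfold dk; continuity_solve.
Qed.

Lemma feynman_0 : feynman 0 = 1 / 4.
Proof.
  unfold feynman. rewrite (Rint_antiderivative (fun x => atan x / PI)).
  - rewrite atan_1, atan_0. field. apply PI_neq0.
  - intro x. pose proof (feynman_denom_pos x). pose proof PI_RGT_0.
    D_solve; [lra|]. unfold feynman_kernel. replace (0 ^ 2) with 0 by ring. rewrite Rmult_0_r, exp_0.
    field. split; nra.
  - apply continuity_feynman_kernel.
Qed.

Lemma feynman_bounds t : 0 <= feynman t <= Gam t / PI.
Proof.
  pose proof PI_RGT_0.
  unfold feynman. split.
  - apply Rle_trans with (Rint (fun _ => 0) 0 1); [rewrite Rint_const; lra|].
    apply Rint_le; auto using continuity_feynman_kernel, continuity_fct_cte; [lra|].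
    intros x _. apply Rlt_le, Rdiv_lt_0_compat; [apply exp_pos | apply feynman_denom_pos].
  - replace (Gam t / PI) with (Rint (fun _ => Gam t / PI) 0 1) by (rewrite Rint_const; ring).
    apply Rint_le; auto using continuity_feynman_kernel, continuity_fct_cte; [lra|].
    intros x _. unfold feynman_kernel, Gam, Rdiv. pose proof (pow2_ge_0 x).
    apply Rmult_le_compat.
    + apply Rlt_le, exp_pos.
    + apply Rlt_le, Rinv_0_lt_compat, feynman_denom_pos.
    + apply exp_le_exp.
      assert (0 <= PI * x ^ 2 * t ^ 2)
        by (apply Rmult_le_pos; [apply Rmult_le_pos|]; auto using pow2_ge_0; lra).
      lra.
    + apply Rinv_le_contravar; nra.
Qed.

Lemma GamInt_sq_plus_feynman t : GamInt t ^ 2 + feynman t = 1 / 4.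
Proof.
  set (F y := GamInt y ^ 2 + feynman y).
  assert (dF : forall y, D F y 0).
  { intro y. unfold F. eapply D_eq.
    - apply D_plus; [apply D_pow2, derivable_pt_lim_GamInt | apply derivable_pt_lim_feynman].
    - ring. }
  pose proof (null_derivative_1 F (fun y => exist _ 0 (dF y)) (fun y => eq_refl)) as cF.
  change (F t = 1 / 4). rewrite (cF t 0). unfold F. rewrite GamInt_0, feynman_0. ring.
Qed.

Lemma GamInt_tail t : 0 <= t -> 0 <= GamInt t /\ 0 <= 1 / 2 - GamInt t <= Gam t.
Proof.
  intro ht. pose proof (GamInt_sq_plus_feynman t). pose proof (feynman_bounds t).
  pose proof (GamInt_le 0 t ht). rewrite GamInt_0 in *.
  pose proof PI_gt_3. pose proof (Gam_pos t).
  assert (Gam t / PI <= Gam t / 2) by (apply Rmult_le_compat_l; [lra|]; apply Rinv_le_contravar; lra).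
  assert (GamInt t <= 1 / 2) by nra.
  split; [|split]; nra.
Qed.

Lemma GamInt_bounds t : - (1 / 2) <= GamInt t <= 1 / 2.
Proof.
  destruct (Rle_dec 0 t) as [ht|ht].
  - pose proof (GamInt_tail t ht). lra.
  - pose proof (GamInt_tail (- t) ltac:(lra)). rewrite GamInt_opp in *. lra.
Qed.

Lemma Gam_le_inv t : 1 <= t -> (t + 1) * Gam t <= / t.
Proof.
  intro ht. unfold Gam. replace (- PI * t ^ 2) with (- (PI * t ^ 2)) by ring.
  rewrite exp_Ropp. pose proof (exp_pos (PI * t ^ 2)). pose proof PI_gt_3.
  assert (t * (t + 1) <= exp (PI * t ^ 2)) by (pose proof (exp_ineq1_le (PI * t ^ 2)); nra).
  apply (Rmult_le_reg_l t); [lra|]. apply (Rmult_le_reg_r (exp (PI * t ^ 2))); [lra|].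
  replace (t * ((t + 1) * / exp (PI * t ^ 2)) * exp (PI * t ^ 2)) with (t * (t + 1))
    by (field; lra).
  rewrite Rinv_r, Rmult_1_l by lra. assumption.
Qed.

Definition tends_to_pinfty (f : R -> R) (l : R) : Prop :=
  forall eps, 0 < eps -> exists M, forall x, M <= x -> Rabs (f x - l) < eps.

Lemma tends_to_pinfty_ext f g l :
  (forall x, f x = g x) -> tends_to_pinfty f l -> tends_to_pinfty g l.
Proof.
  intros fg lim eps heps. destruct (lim eps heps) as [M HM].
  exists M. intros x hx. rewrite <- fg. auto.
Qed.

Lemma tends_to_pinfty_const c : tends_to_pinfty (fun _ => c) c.
Proof. intros eps heps. exists 0. intros. rewrite Rminus_diag, Rabs_R0. assumption. Qed.

Lemma tends_to_pinfty_plus f g l m :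
  tends_to_pinfty f l -> tends_to_pinfty g m -> tends_to_pinfty (fun x => f x + g x) (l + m).
Proof.
  intros limf limg eps heps.
  destruct (limf (eps / 2)) as [M1 HM1]; [lra|].
  destruct (limg (eps / 2)) as [M2 HM2]; [lra|].
  exists (Rmax M1 M2). intros x hx.
  pose proof (Rmax_l M1 M2); pose proof (Rmax_r M1 M2).
  pose proof (HM1 x ltac:(lra)); pose proof (HM2 x ltac:(lra)).
  replace (f x + g x - (l + m)) with ((f x - l) + (g x - m)) by ring.
  pose proof (Rabs_triang (f x - l) (g x - m)). lra.
Qed.

Lemma tends_to_pinfty_scal c f l :
  tends_to_pinfty f l -> tends_to_pinfty (fun x => c * f x) (c * l).
Proof.
  intros limf eps heps. pose proof (Rabs_pos c).
  destruct (limf (eps / (Rabs c + 1))) as [M HM]; [apply Rdiv_lt_0_compat; lra|].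
  exists M. intros x hx. pose proof (HM x hx) as B.
  rewrite <- Rmult_minus_distr_l, Rabs_mult.
  apply (Rmult_lt_compat_l (Rabs c + 1)) in B; [|lra].
  replace ((Rabs c + 1) * (eps / (Rabs c + 1))) with eps in B by (field; lra).
  pose proof (Rabs_pos (f x - l)). nra.
Qed.

Lemma tends_to_pinfty_comp_affine f l a b : 0 < a ->
  tends_to_pinfty f l -> tends_to_pinfty (fun x => f ((x + b) * a)) l.
Proof.
  intros ha limf eps heps. destruct (limf eps heps) as [M HM].
  exists (M / a - b). intros x hx. apply HM.
  replace M with (M / a * a) by (field; lra).
  apply Rmult_le_compat_r; lra.
Qed.

Lemma tends_to_pinfty_inv_bound f l :
  (forall x, 1 <= x -> Rabs (f x - l) <= / x) -> tends_to_pinfty f l.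
Proof.
  intros bound eps heps. exists (Rmax 1 (2 / eps)). intros x hx.
  pose proof (Rmax_l 1 (2 / eps)); pose proof (Rmax_r 1 (2 / eps)).
  apply Rle_lt_trans with (/ x); [apply bound; lra|].
  assert (0 < 2 / eps) by (apply Rdiv_lt_0_compat; lra).
  apply (Rmult_lt_reg_r x); [lra|]. rewrite Rinv_l by lra.
  apply Rlt_le_trans with (eps * (2 / eps)); [|apply Rmult_le_compat_l; lra].
  replace (eps * (2 / eps)) with 2 by (field; lra). lra.
Qed.

Lemma GamInt_tends : tends_to_pinfty GamInt (1 / 2).
Proof.
  apply tends_to_pinfty_inv_bound. intros x hx.
  pose proof (GamInt_tail x ltac:(lra)). pose proof (Gam_le_inv x hx). pose proof (Gam_pos x).
  rewrite Rabs_minus_sym, Rabs_right by lra. nra.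
Qed.

Definition GamInt_primitive (t : R) : R := t * GamInt t + Gam t / (2 * PI).

Lemma derivable_pt_lim_GamInt_primitive t : D GamInt_primitive t (GamInt t).
Proof. pose proof PI_gt_3. unfold GamInt_primitive. D_solve; [lra | field; lra]. Qed.
#[local] Hint Extern 0 (D GamInt_primitive _ _) => apply derivable_pt_lim_GamInt_primitive : derive.

Lemma GamInt_primitive_opp t : GamInt_primitive (- t) = GamInt_primitive t.
Proof. unfold GamInt_primitive. rewrite GamInt_opp, Gam_opp. ring. Qed.

Lemma GamInt_primitive_tends : tends_to_pinfty (fun y => GamInt_primitive y - y / 2) 0.
Proof.
  apply tends_to_pinfty_inv_bound. intros y hy.
  pose proof (GamInt_tail y ltac:(lra)). pose proof (Gam_le_inv y hy).
  pose proof (Gam_pos y). pose proof PI_gt_3.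
  assert (0 <= Gam y / (2 * PI) <= Gam y).
  { split; [apply Rlt_le, Rdiv_lt_0_compat; lra|].
    apply Rmult_le_reg_r with (2 * PI); [lra|]. unfold Rdiv.
    rewrite Rmult_assoc, Rinv_l by lra. nra. }
  unfold GamInt_primitive. rewrite Rminus_0_r. apply Rabs_le. nra.
Qed.

Lemma improper_int_R_odd_antiderivative f F l :
  continuity f -> (forall x, D F x (f x)) -> (forall x, F (- x) = - F x) ->
  tends_to_pinfty F l -> improper_int_R f (2 * l).
Proof.
  intros cf dF oddF limF. split.
  - intros a b. constructor. apply continuity_Riemann_integrable, cf.
  - intros eps heps. destruct (limF (eps / 2)) as [M HM]; [lra|].
    exists M. intros a b ha hb.
    rewrite (Rint_antiderivative F f) by auto.
    pose proof (HM b hb). pose proof (HM (- a) ltac:(lra)). rewrite oddF in *.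
    replace (F b - F a - 2 * l) with ((F b - l) + (- F a - l)) by ring.
    pose proof (Rabs_triang (F b - l) (- F a - l)). lra.
Qed.

Definition window (h L x : R) : R := GamInt ((x + h) * L) - GamInt ((x - h) * L).

Lemma Rint_window h L x : L <> 0 ->
  L * Rint (fun mu => Gam ((x - mu) * L)) (- h) h = window h L x.
Proof.
  intro hL. unfold window.
  rewrite (Rint_antiderivative (fun mu => - GamInt ((x - mu) * L) / L)).
  - replace (x - - h) with (x + h) by ring. field. exact hL.
  - intro mu. D_solve. field. exact hL.
  - continuity_solve.
Qed.

Lemma window_opp h L x : window h L (- x) = window h L x.
Proof.
  unfold window. replace ((- x + h) * L) with (- ((x - h) * L)) by ring.
  replace ((- x - h) * L) with (- ((x + h) * L)) by ring.
  rewrite !GamInt_opp. ring.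
Qed.

Lemma window_ge0 h L x : 0 <= h -> 0 <= L -> 0 <= window h L x.
Proof.
  intros hh hL. unfold window.
  assert (GamInt ((x - h) * L) <= GamInt ((x + h) * L)) by (apply GamInt_le; nra). lra.
Qed.

Lemma window_le0 h L x : h <= 0 -> 0 <= L -> window h L x <= 0.
Proof.
  intros hh hL. unfold window.
  assert (GamInt ((x + h) * L) <= GamInt ((x - h) * L)) by (apply GamInt_le; nra). lra.
Qed.

Lemma window_le1 h L x : window h L x <= 1.
Proof.
  unfold window. pose proof (GamInt_bounds ((x + h) * L)).
  pose proof (GamInt_bounds ((x - h) * L)). lra.
Qed.

Lemma window_ge_inside h L x d : 0 <= L -> 0 <= d -> Rabs x + d <= h ->
  1 - 2 * Gam (d * L) <= window h L x.
Proof.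
  intros hL hd hx. unfold window. pose proof (Rle_abs x); pose proof (Rle_abs (- x)).
  rewrite Rabs_Ropp in *.
  pose proof (GamInt_tail (d * L) ltac:(nra)).
  assert (GamInt (d * L) <= GamInt ((x + h) * L)) by (apply GamInt_le; nra).
  assert (GamInt ((x - h) * L) <= GamInt (- (d * L))) by (apply GamInt_le; nra).
  rewrite GamInt_opp in *. lra.
Qed.

Lemma window_le_outside h L x : 0 <= L -> h <= x -> window h L x <= Gam ((x - h) * L).
Proof.
  intros hL hx. unfold window.
  pose proof (GamInt_tail ((x - h) * L) ltac:(nra)).
  pose proof (GamInt_bounds ((x + h) * L)). lra.
Qed.

Lemma improper_int_R_window h L c : 0 < L ->
  improper_int_R (fun x => window h L x + c * Gam x) (2 * h + c).
Proof.
  intro hL.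
  set (g y := GamInt_primitive y - y / 2).
  set (F x := (GamInt_primitive ((x + h) * L) - GamInt_primitive ((x - h) * L)) / L
              + c * GamInt x).
  replace (2 * h + c) with (2 * (h + c / 2)) by field.
  apply (improper_int_R_odd_antiderivative _ F).
  - unfold window; continuity_solve.
  - intro x. unfold F, window. D_solve; [lra | field; lra].
  - intro x. unfold F. replace ((- x + h) * L) with (- ((x - h) * L)) by ring.
    replace ((- x - h) * L) with (- ((x + h) * L)) by ring.
    rewrite !GamInt_primitive_opp, GamInt_opp. field. lra.
  - apply tends_to_pinfty_ext with
      (fun x => (/ L * g ((x + h) * L) + (- / L) * g ((x - h) * L)) + (c * GamInt x + h)).
    { intro x. unfold F, g. field. lra. }
    replace (h + c / 2) with ((/ L * 0 + - / L * 0) + (c * (1 / 2) + h)) by (field; lra).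
    assert (hg : tends_to_pinfty g 0) by apply GamInt_primitive_tends.
    repeat apply tends_to_pinfty_plus; try apply tends_to_pinfty_scal;
      auto using tends_to_pinfty_comp_affine, GamInt_tends, tends_to_pinfty_const.
    exact (tends_to_pinfty_comp_affine g 0 L (- h) hL hg).
Qed.

Lemma Gam_sqrt_le L x : 1 <= L -> Rabs x <= 1 / 2 -> Gam (sqrt L) <= exp (- L) * Gam x.
Proof.
  intros hL hx. unfold Gam. rewrite <- exp_plus. apply exp_le_exp.
  rewrite <- (pow2_abs x), pow2_sqrt by lra.
  pose proof PI_gt_3. pose proof (Rabs_pos x).
  assert (Rabs x ^ 2 <= 1 / 4) by nra. nra.
Qed.

(* Completing the square: [-PI (u r^2 + r)^2 <= -r^2 - PI (u + 1/2)^2], the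
   difference being a sum of terms that are nonnegative once [r >= 2]. *)
Lemma Gam_affine_le u r : 0 <= u -> 2 <= r ->
  Gam (u * r ^ 2 + r) <= exp (- r ^ 2) * Gam (u + 1 / 2).
Proof.
  intros hu hr. unfold Gam. rewrite <- exp_plus. apply exp_le_exp.
  pose proof PI_gt_3.
  assert (4 <= r ^ 2) by nra.
  assert (0 <= PI * u ^ 2 * (r ^ 4 - 1))
    by (apply Rmult_le_pos; [pose proof (pow2_ge_0 u); nra | nra]).
  assert (0 <= PI * u * (2 * r ^ 3 - 1)) by (apply Rmult_le_pos; nra).
  assert (0 <= (PI - 1) * r ^ 2 - PI / 4) by nra.
  replace (- PI * (u * r ^ 2 + r) ^ 2) with
    (- (PI * u ^ 2 * (r ^ 4 - 1)) - PI * u * (2 * r ^ 3 - 1) - ((PI - 1) * r ^ 2 - PI / 4)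
     + (- r ^ 2 + - PI * (u + 1 / 2) ^ 2)) by field.
  lra.
Qed.

Lemma sqrt_Dlt L : 0 < L -> sqrt (Dlt L) = / sqrt L.
Proof. intro hL. unfold Dlt. apply sqrt_inv. Qed.

Lemma inv_sqrt_mul L : 0 < L -> / sqrt L * L = sqrt L.
Proof.
  intro hL. pose proof (sqrt_lt_R0 L hL).
  rewrite <- (sqrt_sqrt L) at 2 by lra. field. lra.
Qed.

Lemma Phi_plus_window L x : 0 < L ->
  Phi_plus L x = window (1 / 2 + sqrt (Dlt L)) L x + eps1 L * Gam x.
Proof.
  intro hL. rewrite <- Rint_window by lra. unfold Phi_plus.
  replace (- (1 / 2) - sqrt (Dlt L)) with (- (1 / 2 + sqrt (Dlt L))) by ring. reflexivity.
Qed.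

Lemma Phi_minus_window L x : 0 < L ->
  Phi_minus L x = window (1 / 2 - sqrt (Dlt L)) L x + - eps1 L * Gam x.
Proof.
  intro hL. rewrite <- Rint_window by lra. unfold Phi_minus.
  replace (- (1 / 2) + sqrt (Dlt L)) with (- (1 / 2 - sqrt (Dlt L))) by ring. ring.
Qed.

Lemma eps1_Gam_pos L x : 0 < eps1 L * Gam x.
Proof.
  unfold eps1. pose proof (exp_pos (- L)). pose proof (Gam_pos x).
  apply Rmult_lt_0_compat; lra.
Qed.

Lemma chi_le_Phi_plus L x : 2 < L -> chi x <= Phi_plus L x.
Proof.
  intro hL. rewrite Phi_plus_window by lra. rewrite sqrt_Dlt by lra.
  pose proof (sqrt_lt_R0 L ltac:(lra)) as hr. pose proof (Rinv_0_lt_compat _ hr).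
  pose proof (eps1_Gam_pos L x).
  assert (0 <= window (1 / 2 + / sqrt L) L x) by (apply window_ge0; lra).
  unfold chi. destruct (Rle_dec (- (1 / 2)) x); [destruct (Rlt_dec x (1 / 2))|]; [|lra|lra].
  assert (hx : Rabs x <= 1 / 2) by (apply Rabs_le; lra).
  pose proof (window_ge_inside (1 / 2 + / sqrt L) L x (/ sqrt L) ltac:(lra) ltac:(lra)
    ltac:(lra)).
  rewrite inv_sqrt_mul in * by lra.
  pose proof (Gam_sqrt_le L x ltac:(lra) hx).
  unfold eps1 in *. pose proof (exp_pos (- L)). pose proof (Gam_pos x). nra.
Qed.

Lemma window_minus_le_right L x : 2 < L -> 1 / 2 <= x ->
  window (1 / 2 - / sqrt L) L x <= eps1 L * Gam x.
Proof.
  intros hL hx.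
  set (r := sqrt L). pose proof (sqrt_lt_R0 L ltac:(lra)) as hr. fold r in hr.
  pose proof (eps1_Gam_pos L x).
  destruct (Rle_dec 2 r) as [r_ge2 | r_lt2].
  - assert (hL' : L = r ^ 2) by (unfold r; rewrite pow2_sqrt; lra).
    pose proof (Rinv_0_lt_compat r hr).
    eapply Rle_trans; [apply window_le_outside; lra|].
    replace ((x - (1 / 2 - / r)) * L) with ((x - 1 / 2) * r ^ 2 + r) by (rewrite hL'; field; lra).
    eapply Rle_trans; [apply Gam_affine_le; lra|].
    rewrite <- hL'. replace (x - 1 / 2 + 1 / 2) with x by ring.
    unfold eps1. pose proof (exp_pos (- L)). pose proof (Gam_pos x). nra.
  - assert (1 / 2 <= / r).
    { replace (1 / 2) with (/ 2) by field. apply Rinv_le_contravar; lra. }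
    pose proof (window_le0 (1 / 2 - / r) L x ltac:(lra) ltac:(lra)). lra.
Qed.

Lemma Phi_minus_le_chi L x : 2 < L -> Phi_minus L x <= chi x.
Proof.
  intro hL. rewrite Phi_minus_window by lra. rewrite sqrt_Dlt by lra.
  pose proof (eps1_Gam_pos L x). pose proof (window_le1 (1 / 2 - / sqrt L) L x).
  unfold chi. destruct (Rle_dec (- (1 / 2)) x); [destruct (Rlt_dec x (1 / 2))|].
  - lra.
  - pose proof (window_minus_le_right L x hL ltac:(lra)). lra.
  - pose proof (window_minus_le_right L (- x) hL ltac:(lra)).
    rewrite window_opp, Gam_opp in *. lra.
Qed.

Theorem lemma3p1 (L : R) (HL : 2 < L) :
  (forall x : R, Phi_minus L x <= chi x /\ chi x <= Phi_plus L x) /\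
  improper_int_R (Phi_plus L) (1 + (2 * sqrt (Dlt L) + eps1 L)) /\
  improper_int_R (Phi_minus L) (1 - (2 * sqrt (Dlt L) + eps1 L)).
Proof.
  split; [|split].
  - intro x. split; [apply Phi_minus_le_chi | apply chi_le_Phi_plus]; exact HL.
  - replace (Phi_plus L) with (fun x => window (1 / 2 + sqrt (Dlt L)) L x + eps1 L * Gam x)
      by (extensionality x; symmetry; apply Phi_plus_window; lra).
    replace (1 + (2 * sqrt (Dlt L) + eps1 L)) with (2 * (1 / 2 + sqrt (Dlt L)) + eps1 L)
      by field.
    apply improper_int_R_window; lra.
  - replace (Phi_minus L) with (fun x => window (1 / 2 - sqrt (Dlt L)) L x + - eps1 L * Gam x)
      by (extensionality x; symmetry; apply Phi_minus_window; lra).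
    replace (1 - (2 * sqrt (Dlt L) + eps1 L)) with (2 * (1 / 2 - sqrt (Dlt L)) + - eps1 L)
      by field.
    apply improper_int_R_window; lra.
Qed.
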